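(* Let $\varphi$ be an $\mathcal{ALC}$-formula, $M$ an interpretation and $f\in\mathrm{ftypes}(\varphi)$. If $M\models\varphi$ and $M\models\bigwedge\mathrm{lit}(f)$, then $\mathrm{Mod}(\bigwedge\mathrm{lit}(f))=[M]_\varphi$.
   Context: $\mathcal{ALC}$ concepts: $C::=A\mid\neg C\mid(C\sqcap C)\mid\exists r.C$. $\mathcal{ALC}$-formulae: $\phi::=\alpha\mid\neg\phi\mid(\phi\wedge\phi)$, atomic $\alpha::=C(a)\mid r(a,b)\mid(C=\top)$; $\neg\neg\psi$ identified with $\psi$. A literal is an atomic formula or its negation. Interpretations: countable nonempty domain, standard semantics; $\mathrm{Mod}(\psi)$: interpretations satisfying $\psi$. $\mathrm{Sub}(\alpha)=\mathrm{Sub}(\neg\alpha)=\{\alpha,\neg\alpha\}$ for atomic $\alpha$; $\mathrm{Sub}(\psi\wedge\psi')=\mathrm{Sub}(\neg(\psi\wedge\psi'))=\{\psi\wedge\psi',\neg(\psi\wedge\psi')\}\cup\mathrm{Sub}(\psi)\cup\mathrm{Sub}(\psi')$. $\mathrm{con}(\varphi)$: smallest set of concepts containing $C$ whenever $(C=\top)$ or $C(a)$ is in $\mathrm{Sub}(\varphi)$, closed under subconcepts of $\sqcap$, $\exists r.\cdot$, and single negation. $\mathrm{ind}(\varphi)$: individual names in $\varphi$. Concept type: $c\subseteq\mathrm{con}(\varphi)$ with $D\in c$ iff $\neg D\notin c$, $D\sqcap E\in c$ iff $\{D,E\}\subseteq c$. Formula type for $\varphi$: $f\subseteq\mathrm{Sub}(\varphi)$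 with $\psi\in f$ iff $\neg\psi\notin f$, $\psi\wedge\psi'\in f$ iff $\{\psi,\psi'\}\subseteq f$. Model candidate $(T,o,f)$: $T$ set of concept types, $o:\mathrm{ind}(\varphi)\to T$, $f$ formula type with $\varphi\in f$, $C(a)\in f\Rightarrow C\in o(a)$, $r(a,b)\in f\Rightarrow\{\neg C\mid\neg\exists r.C\in o(a)\}\subseteq o(b)$. Quasimodel: model candidate where each $\exists r.D\in c\in T$ has $c'\in T$ with $\{D\}\cup\{\neg E\mid\neg\exists r.E\in c\}\subseteq c'$; $\neg C\in c\in T$ implies $(C=\top)\notin f$; $\neg(C=\top)\in f$ implies some $c\in T$ has $C\notin c$; $T\ne\emptyset$. $\mathrm{ftypes}(\varphi)=\{f\mid(T,o,f)$ quasimodel for $\varphi\}$. $\mathrm{lit}(f)$: literals in $f$. $\mathcal{L}_{lit}(\varphi)$: Boolean combinations of atomic formulae occurring in $\varphi$; $M'\equiv_\varphi M$ iff they satisfy the same formulae of $\mathcal{L}_{lit}(\varphi)$; $[M]_\varphi=\{M'\mid M'\equiv_\varphi M\}$. *)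

From Stdlib Require Import List.
Import ListNotations.
Set Implicit Arguments.

(* Concept names, role names and individual names are natural numbers. *)
Inductive concept : Type :=
| CAtom : nat -> concept
| CNeg : concept -> concept
| CAnd : concept -> concept -> concept
| CEx : nat -> concept -> concept.

Inductive formula : Type :=
| FConc : concept -> nat -> formula
| FRole : nat -> nat -> nat -> formula
| FTop : concept -> formula                  (* C = T *)
| FNeg : formula -> formula
| FAnd : formula -> formula -> formula.

Record interp : Type := {
  dom : Type;
  dom_inh : dom;
  dom_countable : exists g : dom -> nat, forall x y, g x = g y -> x = y;
  conI : nat -> dom -> Prop;
  roleI : nat -> dom -> dom -> Prop;
  indI : nat -> dom
}.

Fixpoint csem (M : interp) (C : concept) : dom M -> Prop :=
  match C with
  | CAtom A => conI M A
  | CNeg D => fun d => ~ csem M D d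
  | CAnd D E => fun d => csem M D d /\ csem M E d
  | CEx r D => fun d => exists e, roleI M r d e /\ csem M D e
  end.

Fixpoint sat (M : interp) (p : formula) : Prop :=
  match p with
  | FConc C a => csem M C (indI M a)
  | FRole r a b => roleI M r (indI M a) (indI M b)
  | FTop C => forall d, csem M C d
  | FNeg q => ~ sat M q
  | FAnd q q' => sat M q /\ sat M q'
  end.

Definition is_atomic (p : formula) : Prop :=
  match p with FConc _ _ | FRole _ _ _ | FTop _ => True | _ => False end.

Definition is_literal (p : formula) : Prop :=
  is_atomic p \/ exists q, p = FNeg q /\ is_atomic q.

(* Identification of ~~psi with psi: formulas are normalised by removing
   double negations; all membership tests are made on normal forms. *)
Fixpoint nf (p : formula) : formula :=
  match p with
  | FNeg q => match nf q with FNeg q' => q' | q' => FNeg q' end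
  | FAnd q q' => FAnd (nf q) (nf q')
  | _ => p
  end.

Fixpoint Sub (p : formula) : list formula :=
  match p with
  | FNeg q => Sub q
  | FAnd q q' => [nf (FAnd q q'); FNeg (nf (FAnd q q'))] ++ Sub q ++ Sub q'
  | _ => [p; FNeg p]
  end.

Definition negC (C : concept) : concept :=
  match C with CNeg D => D | _ => CNeg C end.

Fixpoint subc (C : concept) : list concept :=
  C :: match C with
       | CAtom _ => []
       | CNeg D => subc D
       | CAnd D E => subc D ++ subc E
       | CEx _ D => subc D
       end.

Definition base_concepts (phi : formula) : list concept :=
  flat_map (fun p => match p with FConc C _ => [C] | FTop C => [C] | _ => [] end)
           (Sub phi).

Definition con (phi : formula) : list concept :=
  let S := flat_map subc (base_concepts phi) in S ++ map negC S.

Fixpoint ind (p : formula) : list nat :=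
  match p with
  | FConc _ a => [a]
  | FRole _ a b => [a; b]
  | FTop _ => []
  | FNeg q => ind q
  | FAnd q q' => ind q ++ ind q'
  end.

Definition ctype := concept -> Prop.
Definition ftype := formula -> Prop.

Definition concept_type (phi : formula) (c : ctype) : Prop :=
  (forall D, c D -> In D (con phi)) /\
  (forall D, In D (con phi) -> (c D <-> ~ c (negC D))) /\
  (forall D E, In (CAnd D E) (con phi) -> (c (CAnd D E) <-> c D /\ c E)).

Definition fmem (p : formula) (f : ftype) : Prop := f (nf p).

Definition formula_type (phi : formula) (f : ftype) : Prop :=
  (forall p, f p -> In p (Sub phi)) /\
  (forall p, In p (Sub phi) -> (fmem p f <-> ~ fmem (FNeg p) f)) /\
  (forall p q, In (FAnd p q) (Sub phi) ->
     (fmem (FAnd p q) f <-> fmem p f /\ fmem q f)).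

Definition model_candidate (phi : formula) (T : ctype -> Prop)
  (o : nat -> ctype) (f : ftype) : Prop :=
  (forall c, T c -> concept_type phi c) /\
  (forall a, In a (ind phi) -> T (o a)) /\
  formula_type phi f /\
  fmem phi f /\
  (forall C a, fmem (FConc C a) f -> o a C) /\
  (forall r a b, fmem (FRole r a b) f ->
     forall C, o a (CNeg (CEx r C)) -> o b (negC C)).

Definition quasimodel (phi : formula) (T : ctype -> Prop)
  (o : nat -> ctype) (f : ftype) : Prop :=
  model_candidate phi T o f /\
  (forall c r D, T c -> c (CEx r D) ->
     exists c', T c' /\ c' D /\
       (forall E, c (CNeg (CEx r E)) -> c' (negC E))) /\
  (forall c C, T c -> c (negC C) -> ~ fmem (FTop C) f) /\
  (forall C, fmem (FNeg (FTop C)) f -> exists c, T c /\ ~ c C) /\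
  (exists c, T c).

Definition ftypes (phi : formula) (f : ftype) : Prop :=
  exists T o, quasimodel phi T o f.

(* lit(f) and satisfaction of /\ lit(f) *)
Definition sat_lits (M : interp) (f : ftype) : Prop :=
  forall p, f p -> is_literal p -> sat M p.

Fixpoint atoms (p : formula) : list formula :=
  match p with
  | FNeg q => atoms q
  | FAnd q q' => atoms q ++ atoms q'
  | _ => [p]
  end.

Inductive L_lit (phi : formula) : formula -> Prop :=
| L_atom : forall a, In a (atoms phi) -> L_lit phi a
| L_neg : forall p, L_lit phi p -> L_lit phi (FNeg p)
| L_and : forall p q, L_lit phi p -> L_lit phi q -> L_lit phi (FAnd p q).

Definition equiv_phi (phi : formula) (M' M : interp) : Prop :=
  forall p, L_lit phi p -> (sat M' p <-> sat M p).

(* A formula type [f] for [phi] contains, for every atom [a] of [phi], either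
   [a] or its negation.  Hence two interpretations satisfying lit(f) agree on
   every atom of [phi], and so on every Boolean combination of them.
   Conversely every literal of [f] is such a combination, so an interpretation
   agreeing with [M] on L_lit(phi) inherits lit(f) from [M]. *)
From Stdlib Require Import List Classical.
Set Implicit Arguments.
Unset Strict Implicit.

Lemma L_lit_incl phi psi p :
  incl (atoms phi) (atoms psi) -> L_lit phi p -> L_lit psi p.
Proof.
  intros Hincl HL; induction HL; [apply L_atom, Hincl | apply L_neg | apply L_and];
    assumption.
Qed.

Lemma L_lit_of_Sub_literal phi p :
  In p (Sub phi) -> is_literal p -> L_lit phi p.
Proof.
  induction phi as [C a|r a b|C|phi IH|phi1 IH1 phi2 IH2]; simpl; intros Hin Hlit.
  1-3: destruct Hin as [<-|[<-|[]]]; [|apply L_neg]; apply L_atom; simpl; auto.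
  - apply L_lit_incl with (phi := phi); [apply incl_refl | auto].
  - destruct Hin as [<-|[<-|Hin]].
    + destruct Hlit as [[]|[q [Hq _]]]; discriminate.
    + destruct Hlit as [[]|[q [Hq Hat]]]; injection Hq as <-; destruct Hat.
    + apply in_app_or in Hin as [Hin|Hin].
      * apply L_lit_incl with (phi := phi1); [apply incl_appl, incl_refl | auto].
      * apply L_lit_incl with (phi := phi2); [apply incl_appr, incl_refl | auto].
Qed.

Lemma atoms_atomic_in_Sub phi a :
  In a (atoms phi) -> is_atomic a /\ In a (Sub phi) /\ In (FNeg a) (Sub phi).
Proof.
  induction phi as [C a'|r a' b|C|phi IH|phi1 IH1 phi2 IH2]; simpl; intros Hin.
  1-3: destruct Hin as [<-|[]]; simpl; auto.
  - auto.
  - rewrite !in_app_iff.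
    apply in_app_or in Hin as [Hin|Hin];
      [destruct (IH1 Hin) as (? & ? & ?) | destruct (IH2 Hin) as (? & ? & ?)];
      auto 6.
Qed.

Lemma nf_atomic a : is_atomic a -> nf a = a.
Proof. destruct a; simpl; tauto. Qed.

Lemma nf_neg_atomic a : is_atomic a -> nf (FNeg a) = FNeg a.
Proof. destruct a; simpl; tauto. Qed.

Lemma formula_type_decides_atom phi f a :
  formula_type phi f -> In a (atoms phi) -> f a \/ f (FNeg a).
Proof.
  intros (_ & Hneg & _) Ha.
  destruct (atoms_atomic_in_Sub Ha) as (Hat & HaSub & _).
  specialize (Hneg a HaSub); unfold fmem in Hneg.
  rewrite nf_atomic, nf_neg_atomic in Hneg by exact Hat.
  destruct (classic (f (FNeg a))); tauto.
Qed.

Lemma equiv_phi_of_atoms phi M' M :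
  (forall a, In a (atoms phi) -> (sat M' a <-> sat M a)) -> equiv_phi phi M' M.
Proof.
  intros Hatoms p HL; induction HL; simpl; [auto | tauto | tauto].
Qed.

Lemma sat_lits_agree_on_atoms phi f M M' a :
  formula_type phi f -> sat_lits M f -> sat_lits M' f ->
  In a (atoms phi) -> (sat M' a <-> sat M a).
Proof.
  intros Hf HM HM' Ha.
  assert (Hat : is_atomic a) by apply (atoms_atomic_in_Sub Ha).
  destruct (formula_type_decides_atom Hf Ha) as [Hpos|Hneg].
  - assert (Hlit : is_literal a) by (left; exact Hat).
    specialize (HM _ Hpos Hlit); specialize (HM' _ Hpos Hlit); tauto.
  - assert (Hlit : is_literal (FNeg a)) by (right; eauto).
    specialize (HM _ Hneg Hlit); specialize (HM' _ Hneg Hlit); simpl in *; tauto.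
Qed.

Lemma sat_lits_of_equiv_phi phi f M M' :
  formula_type phi f -> sat_lits M f -> equiv_phi phi M' M -> sat_lits M' f.
Proof.
  intros (Hsub & _) HM Heq p Hp Hlit.
  apply (Heq p (L_lit_of_Sub_literal (Hsub p Hp) Hlit)), HM; assumption.
Qed.

Theorem mainTheorem18 (phi : formula) (M : interp) (f : ftype) :
  ftypes phi f -> sat M phi -> sat_lits M f ->
  forall M' : interp, sat_lits M' f <-> equiv_phi phi M' M.
Proof.
  intros (T & o & (_ & _ & Hf & _) & _) _ HM M'.
  split.
  - intros HM'.
    apply equiv_phi_of_atoms; intros a Ha.
    exact (sat_lits_agree_on_atoms Hf HM HM' Ha).
  - exact (sat_lits_of_equiv_phi Hf HM).
Qed.
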